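(* Let $\ell=p_1^{\alpha_1}\cdots p_\omega^{\alpha_\omega}$ be the prime factorization of a positive integer $\ell$ (distinct primes $p_i$, $\alpha_i\ge1$), and let $\mathcal{A}$ be an $\ell$-Oddtown on $[n]$. For $i\in[\omega]$ let $\mathcal{A}'_i=\{A\in\mathcal{A}: |A|\equiv 0\pmod{p_i^{\alpha_i}}\}$, and let $M_i$ be the $|\mathcal{A}'_i|\times n$ $0$--$1$ matrix whose rows are the characteristic vectors of the sets in $\mathcal{A}'_i$. Call an odd prime $p_i$ dividing $\ell$ good if $M_i$ has at least $n^{0.4}$ distinct columns, and bad otherwise. Then either at most one odd prime divisor of $\ell$ is bad, or \[ |\mathcal{A}|\leq \omega n-n^{0.2}+\omega\ell . \]
   Context: An $\ell$-Oddtown on $[n]=\{1,\dots,n\}$ is a family $\mathcal{A}$ of subsets of $[n]$ such that $|A|\not\equiv 0 \pmod{\ell}$ for every $A\in\mathcal{A}$ and $|A\cap B|\equiv 0\pmod{\ell}$ for all distinct $A,B\in\mathcal{A}$. *)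

From HB Require Import structures.
From mathcomp Require Import all_boot all_order all_algebra.
From mathcomp Require Import reals exp.
Set Implicit Arguments. Unset Strict Implicit. Unset Printing Implicit Defensive.

Definition oddtown (l n : nat) (F : {set {set 'I_n}}) : Prop :=
  (forall A, A \in F -> ~~ (l %| #|A|)) /\
  (forall A B, A \in F -> B \in F -> A != B -> l %| #|A :&: B|).

Definition ppart (l p : nat) : nat := p ^ logn p l.

Definition Aprime (l n : nat) (F : {set {set 'I_n}}) (p : nat) : {set {set 'I_n}} :=
  [set A in F | ppart l p %| #|A|].

(* Column j of the 0-1 matrix with rows the characteristic vectors of the
   sets in S is the 0-1 vector indexed by S, i.e. the subset
   [set A in S | j \in A] of S. Number of distinct columns: *)
Definition distinct_columns (n : nat) (S : {set {set 'I_n}}) : nat :=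
  #|[set [set A in S | j \in A] | j : 'I_n]|.

From HB Require Import structures.
From mathcomp Require Import all_boot all_order all_algebra.
From mathcomp Require Import reals exp lra.
Import Order.TTheory GRing.Theory Num.Theory.
Set Implicit Arguments. Unset Strict Implicit. Unset Printing Implicit Defensive.

(* For a prime p, a family whose sets have sizes not divisible by p^e but whose
   pairwise intersections are has an incidence matrix of full row rank over Q,
   and that rank is at most the number of distinct columns.  Every set of an
   l-Oddtown fails to be divisible by the r-part of l for some prime r of l;
   sorting the sets by such an r, and sending the sets of A'_q that fail at
   p <> q to p, gives |F| <= d_q + (omega - 1) n, where d_q counts the distinct
   columns of M_q.  If q is bad, d_q < n^(2/5), and n^(2/5) + n^(1/5) <= n + 4
   <= n + omega l finishes the proof. *)

Local Open Scope ring_scope.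

Lemma mxrank_le_card_col_labels (K : fieldType) (T : finType) (m n : nat)
    (M : 'M[K]_(m, n)) (g : 'I_n -> T) (h : T -> 'cV[K]_m) :
  (forall j, col j M = h (g j)) -> (\rank M <= #|[set g j | j : 'I_n]|)%N.
Proof.
move=> colM; set C := [set g j | j : 'I_n].
pose D : 'M[K]_(#|C|, m) := \matrix_(x < #|C|) (h (enum_val x))^T.
rewrite -mxrank_tr; apply: leq_trans (rank_leq_row D).
apply: mxrankS; apply/row_subP => j.
have Cj : g j \in C by exact: imset_f.
rewrite -tr_col colM -(enum_rankK_in Cj Cj).
by rewrite -(rowK (fun x => (h (enum_val x))^T)) row_sub.
Qed.

Definition incidence_mx (R : pzRingType) (n : nat) (S : {set {set 'I_n}}) :
  'M[R]_(#|S|, n) := \matrix_(i < #|S|, j < n) (j \in enum_val i)%:R.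

Lemma mxrank_incidence_le_distinct_columns (K : fieldType) (n : nat)
    (S : {set {set 'I_n}}) :
  (\rank (incidence_mx K S) <= distinct_columns S)%N.
Proof.
pose colv (X : {set {set 'I_n}}) : 'cV[K]_#|S| := \col_i (enum_val i \in X)%:R.
apply: (mxrank_le_card_col_labels (h := colv)).
by move=> j; apply/matrixP => i k; rewrite !mxE inE enum_valP.
Qed.

Lemma incidence_mx_gram (R : pzRingType) (n : nat) (S : {set {set 'I_n}}) :
  incidence_mx R S *m (incidence_mx R S)^T =
  \matrix_(i < #|S|, j < #|S|) #|enum_val i :&: enum_val j|%:R.
Proof.
apply/matrixP => i j; rewrite !mxE.
under eq_bigr do rewrite !mxE -natrM.
rewrite -natr_sum -sum1_card; congr _%:R; rewrite [RHS]big_mkcond /=.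
by apply: eq_bigr => k _; rewrite inE; case: (k \in _); case: (k \in _).
Qed.

Lemma det_nat_mx_neq0 (R : numDomainType) (p k : nat) (c : 'I_k -> 'I_k -> nat) :
  prime p -> (forall i j, i != j -> p %| c i j)%N -> (forall i, ~~ (p %| c i i))%N ->
  \det (\matrix_(i, j) (c i j)%:R : 'M[R]_k) != 0.
Proof.
move=> p_pr c_off c_diag.
pose G (T : pzRingType) : 'M[T]_k := \matrix_(i, j) (c i j)%:R.
have G_map (T : nzRingType) (f : {rmorphism int -> T}) : map_mx f (G int) = G T.
  by apply/matrixP => i j; rewrite !mxE rmorph_nat.
have detG_Fp : \det (G 'F_p) != 0.
  have -> : G 'F_p = diag_mx (\row_i (c i i)%:R).
    apply/matrixP => i j; rewrite !mxE; have [->|ij] := eqVneq i j.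
      by rewrite mulr1n.
    by rewrite mulr0n; apply/eqP; rewrite -(dvdn_pcharf (pchar_Fp p_pr)) c_off.
  rewrite det_diag; apply/prodf_neq0 => i _.
  by rewrite mxE -(dvdn_pcharf (pchar_Fp p_pr)) c_diag.
rewrite -[\matrix_(i, j) _]/(G R) -(G_map _ intr) det_map_mx intr_eq0.
apply: contra detG_Fp => /eqP detG0.
by rewrite -(G_map _ intr) det_map_mx detG0 rmorph0.
Qed.

Section PrimePowerOddtown.
Variables (n p e : nat) (S : {set {set 'I_n}}).
Hypothesis p_pr : prime p.
Hypothesis S_card : forall A, A \in S -> ~~ (p ^ e %| #|A|)%N.
Hypothesis S_cap :
  forall A B, A \in S -> B \in S -> A != B -> (p ^ e %| #|A :&: B|)%N.

Let v (A : {set 'I_n}) := logn p #|A|.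

Let card_gt0 A : A \in S -> (0 < #|A|)%N.
Proof. by move=> AS; rewrite lt0n; apply: contraNneq (S_card AS) => ->. Qed.

Lemma logn_card_lt A : A \in S -> (v A < e)%N.
Proof. by move=> AS; rewrite ltnNge -(pfactor_dvdn _ p_pr (card_gt0 AS)) S_card. Qed.

Lemma pfactor_logn_dvdn_cap A B : A \in S -> B \in S -> (p ^ v B %| #|A :&: B|)%N.
Proof.
move=> AS BS; have [->|AB] := eqVneq A B; first by rewrite setIid pfactor_dvdnn.
by apply: dvdn_trans (S_cap AS BS AB); rewrite dvdn_exp2l // ltnW ?logn_card_lt.
Qed.

Lemma scaled_cap_diag A : A \in S -> ~~ (p %| #|A :&: A| %/ p ^ v A)%N.
Proof.
move=> AS; rewrite setIid dvdn_divRL ?pfactor_dvdnn // -expnS.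
by rewrite (pfactor_dvdn _ p_pr (card_gt0 AS)) ltnn.
Qed.

Lemma scaled_cap_offdiag A B :
  A \in S -> B \in S -> A != B -> (p %| #|A :&: B| %/ p ^ v B)%N.
Proof.
move=> AS BS AB; rewrite dvdn_divRL ?pfactor_logn_dvdn_cap // -expnS.
by apply: dvdn_trans (S_cap AS BS AB); rewrite dvdn_exp2l ?logn_card_lt.
Qed.

Lemma card_le_mxrank_incidence (K : numFieldType) :
  (#|S| <= \rank (incidence_mx K S))%N.
Proof.
set M := incidence_mx K S.
(* Dividing column j of the Gram matrix by the p-part of |A_j| leaves an
   integer matrix that is diagonal with units modulo p. *)
pose c (i j : 'I_#|S|) := (#|enum_val i :&: enum_val j| %/ p ^ v (enum_val j))%N.
pose D : 'M[K]_#|S| := diag_mx (\row_j (p ^ v (enum_val j))%:R).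
have gram : M *m M^T = \matrix_(i, j) (c i j)%:R *m D.
  rewrite incidence_mx_gram mul_mx_diag; apply/matrixP => i j.
  by rewrite !mxE -natrM divnK ?pfactor_logn_dvdn_cap ?enum_valP.
have : M *m M^T \in unitmx.
  rewrite gram unitmxE det_mulmx det_diag unitfE mulf_neq0 //.
    apply: (det_nat_mx_neq0 _ p_pr) => [i j ij|i].
      by rewrite scaled_cap_offdiag ?enum_valP ?(contra_neq (@enum_val_inj _ _ i j)).
    exact/scaled_cap_diag/enum_valP.
  by apply/prodf_neq0 => j _; rewrite mxE pnatr_eq0 -lt0n expn_gt0 prime_gt0.
by move/mxrank_unit => {1}<-; exact: mxrankM_maxl.
Qed.

End PrimePowerOddtown.

Lemma prime_power_oddtown_card_le (n p e : nat) (S : {set {set 'I_n}}) :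
  prime p -> (forall A, A \in S -> ~~ (p ^ e %| #|A|)%N) ->
  (forall A B, A \in S -> B \in S -> A != B -> (p ^ e %| #|A :&: B|)%N) ->
  (#|S| <= distinct_columns S)%N.
Proof.
move=> p_pr S_card S_cap.
apply: leq_trans (card_le_mxrank_incidence p_pr S_card S_cap rat) _.
exact: mxrank_incidence_le_distinct_columns.
Qed.

Lemma leq_card_bigcup_seq (T : finType) (I : Type) (s : seq I) (P : pred I)
    (B : I -> {set T}) :
  (#|\bigcup_(i <- s | P i) B i| <= \sum_(i <- s | P i) #|B i|)%N.
Proof.
apply: (big_ind2 (fun (X : {set T}) m => #|X| <= m)%N) => [|X m Y k le_Xm le_Yk|//].
  by rewrite cards0.
exact: leq_trans (leq_card_setU X Y) (leq_add le_Xm le_Yk).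
Qed.

Lemma exists_ppart_ndvdn (l m : nat) :
  (0 < l)%N -> ~~ (l %| m)%N -> exists2 r, r \in primes l & ~~ (ppart l r %| m)%N.
Proof.
move=> l_gt0 l_ndvd; apply/hasP; apply: contraR l_ndvd => /hasPn l_parts.
apply/(dvdn_partP _ l_gt0) => r r_l; rewrite p_part.
by have := l_parts r r_l; rewrite negbK.
Qed.

Lemma distinct_columns_le (n : nat) (S : {set {set 'I_n}}) :
  (distinct_columns S <= n)%N.
Proof. by apply: leq_trans (leq_imset_card _ _) _; rewrite card_ord. Qed.

Lemma distinct_columns_subset (n : nat) (S T : {set {set 'I_n}}) :
  S \subset T -> (distinct_columns S <= distinct_columns T)%N.
Proof.
move=> ST; rewrite /distinct_columns.
have -> : [set [set A in S | j \in A] | j : 'I_n] =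
          setI S @: [set [set A in T | j \in A] | j : 'I_n].
  rewrite -imset_comp; apply: eq_imset => j /=; apply/setP => A; rewrite !inE.
  by case: (boolP (A \in S)) => //= AS; rewrite (subsetP ST A AS).
exact: leq_imset_card.
Qed.

Lemma oddtown_card_le_distinct_columns (l n r : nat) (F S : {set {set 'I_n}}) :
  oddtown l F -> r \in primes l -> S \subset F ->
  (forall A, A \in S -> ~~ (ppart l r %| #|A|)%N) ->
  (#|S| <= distinct_columns S)%N.
Proof.
move=> [_ F_cap] r_l SF S_ndvd.
apply: (prime_power_oddtown_card_le (p := r) (e := logn r l)) => //.
  by move: r_l; rewrite mem_primes => /and3P[].
move=> A B AS BS AB; apply: dvdn_trans (pfactor_dvdnn r l) _.
by apply: F_cap => //; apply: (subsetP SF).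
Qed.

Lemma oddtown_card_add_le (l n p q : nat) (F : {set {set 'I_n}}) :
  (0 < l)%N -> oddtown l F -> p \in primes l -> q \in primes l -> p != q ->
  (#|F| + n <= distinct_columns (Aprime l F q) + size (primes l) * n)%N.
Proof.
move=> l_gt0 oddF p_l q_l pq.
pose Ap r := [set A in F | ~~ (ppart l r %| #|A|)%N].
pose Bp := Aprime l F q :&: Ap p.
have card_Ap r : r \in primes l -> (#|Ap r| <= n)%N.
  move=> r_l; apply: leq_trans (distinct_columns_le (Ap r)).
  apply: (oddtown_card_le_distinct_columns oddF r_l).
    by apply/subsetP => A; rewrite inE => /andP[].
  by move=> A; rewrite inE => /andP[].
have card_Bp : (#|Bp| <= distinct_columns (Aprime l F q))%N.
  apply: leq_trans (distinct_columns_subset (subsetIl _ _)).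
  apply: (oddtown_card_le_distinct_columns oddF p_l).
    by apply/subsetP => A; rewrite !inE => /andP[_ /andP[]].
  by move=> A; rewrite !inE => /andP[_ /andP[]].
have F_sub : F \subset Bp :|: \bigcup_(r <- primes l | r != p) Ap r.
  apply/subsetP => A AF; rewrite inE; case: (boolP (A \in Bp)) => //= A_nBp.
  have [r r_l A_r] : exists2 r, r \in primes l & (r != p) && ~~ (ppart l r %| #|A|)%N.
    move: A_nBp; rewrite !inE AF /= negb_and negbK => /orP[A_nq|A_p].
      by exists q; rewrite // eq_sym pq.
    have [r r_l A_nr] := exists_ppart_ndvdn l_gt0 (oddF.1 A AF).
    by exists r; rewrite // A_nr andbT; apply: contraNneq A_nr => ->.
  by case/andP: A_r => rp A_nr; rewrite (big_rem r) //= rp !inE AF A_nr.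
have sum_n : (\sum_(r <- primes l | r != p) n + n = size (primes l) * n)%N.
  rewrite addnC -(bigD1_seq p p_l (primes_uniq l)) /=.
  by rewrite big_const_seq count_predT iter_addn_0 mulnC.
rewrite -sum_n addnA leq_add2r.
apply: leq_trans (subset_leq_card F_sub) _; apply: leq_trans (leq_card_setU _ _) _.
apply: leq_add card_Bp _; apply: leq_trans (leq_card_bigcup_seq _ _ _) _.
rewrite big_seq_cond [X in (_ <= X)%N]big_seq_cond.
by apply: leq_sum => r /andP[r_l _]; exact: card_Ap.
Qed.

Lemma sqr_add_le_pow5_add4 (R : realFieldType) (y : R) :
  0 <= y -> y ^+ 2 + y <= y ^+ 5 + 4.
Proof.
move=> y_ge0; have [y_small|y_large] := lerP y (3 / 2).
  have : y ^+ 2 <= 9 / 4 by rewrite expr2; nra.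
  have : 0 <= y ^+ 5 by rewrite exprn_ge0.
  lra.
have y3_ge2 : 2 <= y ^+ 3 by rewrite !exprS expr0; nra.
have : 2 * y ^+ 2 <= y ^+ 5 by rewrite (_ : 5 = 2 + 3)%N // exprD; nra.
have : y <= y ^+ 2 by rewrite expr2; nra.
lra.
Qed.

Lemma powR_fifths_le (R : realType) (x : R) :
  0 <= x -> x `^ (2 / 5) + x `^ (1 / 5) <= x + 4.
Proof.
move=> x_ge0; set y := x `^ (1 / 5).
have pow_y k : x `^ (k%:R / 5) = y ^+ k.
  by rewrite /y -powR_mulrn ?powR_ge0 // -powRrM mul1r mulrC.
have x_eq : x = y ^+ 5 by rewrite -pow_y divff ?pnatr_eq0 ?powRr1.
by rewrite (pow_y 2%N) [X in _ <= X + _]x_eq sqr_add_le_pow5_add4 ?powR_ge0.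
Qed.

Theorem lemma3p2 (R : realType) (l n : nat) (F : {set {set 'I_n}}) :
  (0 < l)%N -> @oddtown l n F ->
  let omega := size (primes l) in
  let bad (p : nat) :=
    ((@distinct_columns n (@Aprime l n F p))%:R < (n%:R : R) `^ (2 / 5)) in
  (count (fun p => odd p && bad p) (primes l) <= 1)%N \/
  ((#|F|%:R : R) <= omega%:R * n%:R - (n%:R : R) `^ (1 / 5) + omega%:R * l%:R).
Proof.
move=> l_gt0 oddF omega bad.
have [|many_bad] := leqP (count (fun p => odd p && bad p) (primes l)) 1; [by left | right].
have [q q_l /andP[_ q_bad]] : exists2 q, q \in primes l & odd q && bad q.
  by apply/hasP; rewrite has_count ltnW.
have omega_gt1 : (1 < omega)%N := leq_trans many_bad (count_size _ _).
have [p p_l p_q] : exists2 p, p \in primes l & p != q.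
  apply/hasP; apply: contraLR omega_gt1 => /hasPn only_q; rewrite -leqNgt.
  apply: (@uniq_leq_size _ _ [:: q] (primes_uniq l)) => r /only_q.
  by rewrite negbK inE.
have l_ge2 : (2 <= l)%N.
  move: q_l; rewrite mem_primes => /and3P[/prime_gt1 q_gt1 _ q_dvd].
  exact: leq_trans q_gt1 (dvdn_leq l_gt0 q_dvd).
have omega_l_ge4 : (4 <= omega * l)%N := leq_mul omega_gt1 l_ge2.
have := oddtown_card_add_le l_gt0 oddF p_l q_l p_q.
have := powR_fifths_le (ler0n R n).
move: omega_l_ge4 q_bad; rewrite /bad -!(ler_nat R) !natrD !natrM.
lra.
Qed.
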